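(* Consider the parabola $y=\frac{a_N}{a_D}x^2+\frac{b_N}{b_D}x+c$, where $\frac{a_N}{a_D}\ne0$ and $\frac{b_N}{b_D}$ are reduced fractions with positive denominators and $c\in\mathbb R$, and let $\bar H=\mathrm{lcm}(a_D,b_D)$. Its horizontal period $H$ equals $\bar H$ or $\bar H/2$; precisely: (i) if $a_D\equiv0\pmod4$, then $H=\mathrm{lcm}(a_D/2,b_D)$; (ii) if $a_D\equiv2\pmod4$ and $b_D\equiv2\pmod4$, then $H=\mathrm{lcm}(a_D/2,b_D/2)$; (iii) in all other cases, $H=\mathrm{lcm}(a_D,b_D)$.
   Context: The horizontal period $H$ of the parabola $y=\alpha x^2+\beta x+c$ (with $\alpha=a_N/a_D$, $\beta=b_N/b_D$) is the smallest positive integer $H$ such that $z=2\alpha H$ and $w=\alpha H^2+\beta H$ are both integers; equivalently, the smallest positive integer $H$ for which there is an affine map of the form $(x,y)\mapsto(x+H,\ zx+y+w)$ mapping both $\mathbb Z^2$ and the parabola onto themselves. *)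

From HB Require Import structures.
From mathcomp Require Import all_boot all_order all_algebra.
Set Implicit Arguments. Unset Strict Implicit. Unset Printing Implicit Defensive.
Import Order.TTheory GRing.Theory Num.Theory.
Local Open Scope ring_scope.

Definition is_integer (x : rat) : Prop := exists z : int, x = z%:~R.

Definition hperiod_ok (alpha beta : rat) (H : nat) : Prop :=
  (0 < H)%N /\ is_integer (2 * alpha * H%:R) /\
  is_integer (alpha * (H%:R) ^+ 2 + beta * H%:R).

Definition horizontal_period (alpha beta : rat) (H : nat) : Prop :=
  hperiod_ok alpha beta H /\ forall H', hperiod_ok alpha beta H' -> (H <= H')%N.

Definition predicted_period (aD bD : nat) : nat :=
  (if aD %% 4 == 0 then lcmn (aD %/ 2) bD
  else if (aD %% 4 == 2) && (bD %% 4 == 2) then lcmn (aD %/ 2) (bD %/ 2)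
  else lcmn aD bD)%N.

From mathcomp Require Import all_boot all_order all_algebra.
From mathcomp Require Import zify ring.

(* For a reduced fraction a/d, the rational a x / d (x natural) is an integer
   iff d | x.  Hence z = 2 alpha H is an integer iff aD | 2H, and whenever
   aD | H^2 the condition on w = alpha H^2 + beta H reads bD | H; in any case
   2w - zH = 2 beta H forces bD | 2H.  The only way for w to be an integer
   without aD | H^2 is H odd with aD = bD = 2 (mod 4): then w is half the sum
   of two odd integers.  Sorting by the residues of aD and bD mod 4 shows that
   the admissible H are exactly the positive multiples of the predicted period
   P; as lcm(aD, bD) is admissible and divides 2P, it equals P or 2P. *)

Set Implicit Arguments.
Unset Strict Implicit.
Unset Printing Implicit Defensive.
Import Order.TTheory GRing.Theory Num.Theory.
Local Open Scope ring_scope.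

Lemma is_integerP (x : rat) : is_integer x <-> x \is a Num.int.
Proof. by split=> [[z ->]|/intrP//]; exact: intr_int. Qed.

Lemma Qint_coprime_frac (a : int) (d x : nat) : (0 < d)%N -> coprime `|a| d ->
  (a%:~R * x%:R / d%:R : rat) \is a Num.int = (d %| x)%N.
Proof.
move=> d_gt0 coprime_ad; have d_neq0 : d%:R != 0 :> rat by rewrite pnatr_eq0 -lt0n.
apply/intrP/idP => [[z az] | /dvdnP[k ->]]; last first.
  by exists (a * k%:Z); rewrite rmorphM /=; field.
have /intr_inj az_int : (a * x%:Z)%:~R = (z * d%:Z)%:~R :> rat.
  by rewrite !rmorphM /= -!pmulrn -az divfK.
have : (d %| `|a| * x)%N by rewrite -[x]/`|x%:Z|%N -abszM az_int abszM dvdn_mull.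
by rewrite Gauss_dvdr // coprime_sym.
Qed.

Lemma odd_coprime_even (a : int) (d : nat) : coprime `|a| d -> ~~ odd d -> odd `|a|.
Proof. by move=> coprime_ad even_d; rewrite -coprimen2 (coprime_dvdr _ coprime_ad) // dvdn2. Qed.

Lemma Qint_half_add_odd (x y : int) : odd `|x| -> odd `|y| ->
  ((x + y)%:~R / 2 : rat) \is a Num.int.
Proof.
move=> odd_x odd_y; apply/intrP; exists ((x + y) %/ 2)%Z.
have {1}-> : x + y = ((x + y) %/ 2)%Z * 2 by lia.
by rewrite rmorphM /= mulfK.
Qed.

Lemma dvdn_double_half d H : ~~ odd d -> (d %| 2 * H)%N = (d %/ 2 %| H)%N.
Proof. by move=> even_d; rewrite {1}(_ : d = 2 * (d %/ 2))%N ?dvdn_pmul2l //; lia. Qed.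

Lemma dvdn_half_even d H : (d %% 4 = 2)%N -> ~~ odd H -> (d %| H)%N = (d %/ 2 %| H)%N.
Proof.
move=> d_mod4 even_H; have odd_half : odd (d %/ 2) by lia.
by rewrite {1}(_ : d = 2 * (d %/ 2))%N ?Gauss_dvd ?coprime2n ?dvdn2 ?even_H //; lia.
Qed.

Lemma dvdn_double_odd d H : odd H -> ~~ odd d -> (d %| 2 * H)%N -> (d %% 4 = 2)%N.
Proof.
move=> odd_H even_d; rewrite dvdn_double_half // => /dvdnP[k H_eq].
have : odd (d %/ 2) by apply: dvdn_odd odd_H; rewrite H_eq dvdn_mull.
lia.
Qed.

Lemma eq_or_double_dvdn P L : (0 < L)%N -> (P %| L)%N -> (L %| 2 * P)%N ->
  P = L \/ P.*2 = L.
Proof.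
move=> L_gt0 /dvdnP[k L_eq]; subst L; move: L_gt0; rewrite muln_gt0 => /andP[k_gt0 P_gt0].
rewrite dvdn_pmul2r // => /(@dvdn_leq _ 2 isT) k_le2.
by case: k k_gt0 k_le2 => [|[|[|]]] //= _ _; [left; rewrite mul1n|right; rewrite mul2n].
Qed.

Section HorizontalPeriod.

Variables (aN : int) (aD : nat) (bN : int) (bD : nat).
Hypotheses (aD_gt0 : (0 < aD)%N) (aN_aD_coprime : coprime `|aN| aD).
Hypotheses (bD_gt0 : (0 < bD)%N) (bN_bD_coprime : coprime `|bN| bD).

Let alpha : rat := aN%:~R / aD%:R.
Let beta : rat := bN%:~R / bD%:R.
Local Notation ok := (hperiod_ok alpha beta).

Let aD_neq0 : aD%:R != 0 :> rat. Proof. by rewrite pnatr_eq0 -lt0n. Qed.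
Let bD_neq0 : bD%:R != 0 :> rat. Proof. by rewrite pnatr_eq0 -lt0n. Qed.

Let alpha2_mulr_int H : (2 * alpha * H%:R \is a Num.int) = (aD %| 2 * H)%N.
Proof.
rewrite -(Qint_coprime_frac _ aD_gt0 aN_aD_coprime) /alpha natrM.
by congr (_ \is a _); field.
Qed.

Let alpha_sqr_int H : (alpha * H%:R ^+ 2 \is a Num.int) = (aD %| H * H)%N.
Proof.
rewrite -(Qint_coprime_frac _ aD_gt0 aN_aD_coprime) /alpha natrM.
by congr (_ \is a _); field.
Qed.

Let beta_mulr_int H : (beta * H%:R \is a Num.int) = (bD %| H)%N.
Proof.
rewrite -(Qint_coprime_frac _ bD_gt0 bN_bD_coprime) /beta.
by congr (_ \is a _); field.
Qed.

Lemma hperiod_ok_dvdn2 H : ok H -> (aD %| 2 * H)%N /\ (bD %| 2 * H)%N.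
Proof.
case=> _ [/is_integerP z_int /is_integerP w_int].
rewrite -alpha2_mulr_int -beta_mulr_int z_int; split=> //.
have -> : beta * (2 * H)%N%:R =
    2 * (alpha * H%:R ^+ 2 + beta * H%:R) - 2 * alpha * H%:R * H%:R.
  by rewrite natrM; ring.
by apply: rpredB; apply: rpredM; rewrite ?rpred_nat.
Qed.

Lemma hperiod_okE H : (aD %| H * H)%N ->
  ok H <-> [/\ 0 < H, aD %| 2 * H & bD %| H]%N.
Proof.
rewrite -alpha_sqr_int -alpha2_mulr_int -beta_mulr_int => sqr_int.
split=> [[H_gt0 [/is_integerP z_int /is_integerP w_int]] | [H_gt0 z_int b_int]].
  split=> //; rewrite -(addKr (alpha * H%:R ^+ 2) (beta * H%:R)).
  by apply: rpredD; rewrite ?rpredN.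
by split=> //; split; apply/is_integerP; rewrite ?rpredD.
Qed.

Lemma hperiod_ok_dvdn_sqr H : ok H -> (bD %| H)%N -> (aD %| H * H)%N.
Proof.
case=> _ [_ /is_integerP w_int]; rewrite -alpha_sqr_int -beta_mulr_int => b_int.
by rewrite -(addrK (beta * H%:R) (alpha * H%:R ^+ 2)) rpredB.
Qed.

Lemma hperiod_ok_lcm : ok (lcmn aD bD).
Proof.
have aD_dvd := dvdn_lcml aD bD.
apply/(hperiod_okE (dvdn_mulr _ aD_dvd)).
by split; rewrite ?lcmn_gt0 ?aD_gt0 ?dvdn_mull ?dvdn_lcmr.
Qed.

Lemma hperiod_ok_odd_parity H : ok H -> odd H -> odd aD = odd bD.
Proof.
move=> okH odd_H; have [aD_dvd2 bD_dvd2] := hperiod_ok_dvdn2 okH.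
case odd_aD: (odd aD); case odd_bD: (odd bD) => //.
- have aD_dvd : (aD %| H)%N by rewrite -(Gauss_dvdr _ (_ : coprime aD 2)) ?coprimen2.
  have [_ _ bD_dvd] := (hperiod_okE (dvdn_mulr _ aD_dvd)).1 okH.
  by rewrite (dvdn_odd bD_dvd odd_H) in odd_bD.
- have bD_dvd : (bD %| H)%N by rewrite -(Gauss_dvdr _ (_ : coprime bD 2)) ?coprimen2.
  have := dvdn_odd (hperiod_ok_dvdn_sqr okH bD_dvd).
  by rewrite oddM odd_H odd_aD => /(_ isT).
Qed.

Lemma hperiod_ok_odd_mod4_2 H : (aD %% 4 = 2)%N -> (bD %% 4 = 2)%N -> odd H ->
  (aD %| 2 * H)%N -> (bD %| 2 * H)%N -> ok H.
Proof.
move=> aD_mod4 bD_mod4 odd_H.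
rewrite !dvdn_double_half; try lia.
set m := (aD %/ 2)%N; set n := (bD %/ 2)%N.
move=> /dvdnP[k H_eq_km] /dvdnP[l H_eq_ln].
have [aD_eq bD_eq] : aD = (2 * m)%N /\ bD = (2 * n)%N by rewrite /m /n; split; lia.
have [m_gt0 n_gt0] : (0 < m)%N /\ (0 < n)%N by rewrite /m /n; split; lia.
clearbody m n.
have odd_k : odd k by apply: dvdn_odd odd_H; rewrite H_eq_km dvdn_mulr.
have odd_l : odd l by apply: dvdn_odd odd_H; rewrite H_eq_ln dvdn_mulr.
have [odd_aN odd_bN] : odd `|aN| /\ odd `|bN|.
  by split; [apply: odd_coprime_even aN_aD_coprime _ | apply: odd_coprime_even bN_bD_coprime _]; lia.
split; first by case: (H) odd_H.
split; apply/is_integerP; first by rewrite alpha2_mulr_int aD_eq H_eq_km dvdn_pmul2l // dvdn_mull.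
have -> : alpha * H%:R ^+ 2 + beta * H%:R = (aN * (k * H)%N + bN * l)%:~R / 2.
  rewrite /alpha /beta aD_eq bD_eq expr2 {1}H_eq_km {2}H_eq_ln intrD !intrM.
  by rewrite -!pmulrn !natrM; field; rewrite !pnatr_eq0 -!lt0n m_gt0 n_gt0.
by apply: Qint_half_add_odd; rewrite abszM ?oddM ?odd_aN ?odd_bN ?odd_k ?odd_H.
Qed.

Lemma hperiod_ok_mod4_0 H : (aD %% 4 = 0)%N ->
  ok H <-> (0 < H)%N /\ (lcmn (aD %/ 2) bD %| H)%N.
Proof.
move=> aD_mod4; have even_aD : ~~ odd aD by lia.
have dvdn_sqr K : (aD %/ 2 %| K)%N -> (aD %| K * K)%N.
  move=> half_dvd; rewrite (_ : aD = 2 * (aD %/ 2))%N; last by lia.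
  by rewrite dvdn_mul // (dvdn_trans _ half_dvd) //; lia.
rewrite dvdn_lcm; split=> [okH | [H_gt0 /andP[half_dvd bD_dvd]]].
  have [aD_dvd2 _] := hperiod_ok_dvdn2 okH.
  have half_dvd : (aD %/ 2 %| H)%N by rewrite -dvdn_double_half.
  have [H_gt0 _ bD_dvd] := (hperiod_okE (dvdn_sqr _ half_dvd)).1 okH.
  by rewrite half_dvd bD_dvd.
by apply/(hperiod_okE (dvdn_sqr _ half_dvd)); rewrite dvdn_double_half.
Qed.

Lemma hperiod_ok_mod4_2 H : (aD %% 4 = 2)%N -> (bD %% 4 = 2)%N ->
  ok H <-> (0 < H)%N /\ (lcmn (aD %/ 2) (bD %/ 2) %| H)%N.
Proof.
move=> aD_mod4 bD_mod4; have even_aD : ~~ odd aD by lia.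
have even_bD : ~~ odd bD by lia.
rewrite dvdn_lcm -!dvdn_double_half //; split=> [okH | [H_gt0 /andP[aD_dvd2 bD_dvd2]]].
  by have [? ?] := hperiod_ok_dvdn2 okH; split; [case: okH | apply/andP].
have [odd_H | even_H] := boolP (odd H); first exact: hperiod_ok_odd_mod4_2.
have aD_dvd : (aD %| H)%N by rewrite dvdn_half_even // -dvdn_double_half.
have bD_dvd : (bD %| H)%N by rewrite dvdn_half_even // -dvdn_double_half.
by apply/(hperiod_okE (dvdn_mulr _ aD_dvd)).
Qed.

Lemma hperiod_ok_mod4_other H : (aD %% 4 != 0)%N ->
  ~~ ((aD %% 4 == 2) && (bD %% 4 == 2))%N ->
  ok H <-> (0 < H)%N /\ (lcmn aD bD %| H)%N.
Proof.
move=> aD_mod4 not_both_mod4_2; rewrite dvdn_lcm; split; last first.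
  case=> H_gt0 /andP[aD_dvd bD_dvd].
  by apply/(hperiod_okE (dvdn_mulr _ aD_dvd)); rewrite dvdn_mull.
move=> okH; have H_gt0 : (0 < H)%N by case: okH.
suff aD_dvd : (aD %| H)%N.
  have [_ _ bD_dvd] := (hperiod_okE (dvdn_mulr _ aD_dvd)).1 okH.
  by rewrite aD_dvd bD_dvd.
have [aD_dvd2 bD_dvd2] := hperiod_ok_dvdn2 okH.
have [odd_aD | even_aD] := boolP (odd aD).
  by rewrite -(Gauss_dvdr _ (_ : coprime aD 2)) ?coprimen2.
have aD_mod4_2 : (aD %% 4 = 2)%N by lia.
have [odd_H | even_H] := boolP (odd H); last first.
  by rewrite dvdn_half_even // -dvdn_double_half.
(* an odd admissible H would force bD = 2 (mod 4) as well *)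
have even_bD : ~~ odd bD by rewrite -(hperiod_ok_odd_parity okH odd_H).
have := dvdn_double_odd odd_H even_bD bD_dvd2.
by move: not_both_mod4_2; rewrite aD_mod4_2 eqxx /= => /eqP.
Qed.

Lemma hperiod_okP H : ok H <-> (0 < H)%N /\ (predicted_period aD bD %| H)%N.
Proof.
rewrite /predicted_period; case: ifP => [/eqP | aD_mod4].
  exact: hperiod_ok_mod4_0.
case: ifP => [/andP[/eqP aD_mod4_2 /eqP bD_mod4_2] | not_both_mod4_2].
  exact: hperiod_ok_mod4_2.
by apply: hperiod_ok_mod4_other; rewrite ?aD_mod4 ?not_both_mod4_2.
Qed.

Lemma predicted_period_dvdn_lcm : (predicted_period aD bD %| lcmn aD bD)%N.
Proof. by have [] := (hperiod_okP _).1 hperiod_ok_lcm. Qed.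

Lemma predicted_period_gt0 : (0 < predicted_period aD bD)%N.
Proof. by apply: dvdn_gt0 predicted_period_dvdn_lcm; rewrite lcmn_gt0 aD_gt0. Qed.

Lemma hperiod_ok_predicted : ok (predicted_period aD bD).
Proof. by apply/hperiod_okP; rewrite predicted_period_gt0. Qed.

Lemma lcmn_dvdn_double_predicted : (lcmn aD bD %| 2 * predicted_period aD bD)%N.
Proof. by have [? ?] := hperiod_ok_dvdn2 hperiod_ok_predicted; rewrite dvdn_lcm; apply/andP. Qed.

Lemma horizontal_period_predicted :
  horizontal_period alpha beta (predicted_period aD bD).
Proof.
split=> [|H /hperiod_okP[H_gt0 P_dvd_H]]; first exact: hperiod_ok_predicted.
exact: dvdn_leq.
Qed.

End HorizontalPeriod.

Theorem proposition5 (aN : int) (aD : nat) (bN : int) (bD : nat) :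
  aN != 0 -> (0 < aD)%N -> coprime `|aN|%N aD ->
  (0 < bD)%N -> coprime `|bN|%N bD ->
  let alpha : rat := aN%:~R / aD%:R in
  let beta : rat := bN%:~R / bD%:R in
  horizontal_period alpha beta (predicted_period aD bD) /\
  (predicted_period aD bD = lcmn aD bD \/
   (predicted_period aD bD).*2 = lcmn aD bD)%N.
Proof.
move=> _ aD_gt0 aN_aD_coprime bD_gt0 bN_bD_coprime alpha beta.
split; first exact: horizontal_period_predicted.
apply: eq_or_double_dvdn.
- by rewrite lcmn_gt0 aD_gt0.
- exact: predicted_period_dvdn_lcm aD_gt0 aN_aD_coprime bD_gt0 bN_bD_coprime.
- exact: lcmn_dvdn_double_predicted aD_gt0 aN_aD_coprime bD_gt0 bN_bD_coprime.
Qed.
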